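(* Fix integers $2\le k\le n$, let $M=\lceil n/k\rceil$ and $r=n-(M-1)k$, and consider the $k$-grouped $(k,n)$ random-grid sharing of a secret bit described in the context. Let $\vec\lambda=(\lambda_1,\ldots,\lambda_M)$ be a valid partition and suppose $\lambda_j$ shadow images are selected from the $j$-th group for each $j$. Let $x$ be an integer with $\lambda_M\le x\le k$ and let $B\in\{0,1\}^{1\times x}$ be any row vector of Hamming weight $\lambda_M$. Then $$\Pr(\#C(\vec\lambda)=x)=\frac{\binom{k-\lambda_M}{x-\lambda_M}\,\bigl|\mathcal{E}^{\vec\lambda}_x(B)\bigr|}{\prod_{j=1}^{M-1}\binom{k}{\lambda_j}}.$$
   Context: Sharing of a secret bit $s$: $b_1,\ldots,b_{k-1}$ are independent uniform bits and $b_k=s\oplus b_1\oplus\cdots\oplus b_{k-1}$. The $n$ shares form $M$ groups; groups $1,\ldots,M-1$ have $k$ positions and group $M$ has $r$ positions. Group 1 is $(b_1,\ldots,b_k)$ (position $\delta$ carries index $\delta$). For each $j\ge2$ an independent uniformly random permutation $\sigma_j$ of $\{1,\ldots,k\}$ is drawn and position $\delta$ of group $j$ carries index $\sigma_j(\delta)$ and bit $b_{\sigma_j(\delta)}$ ($\delta\le r$ for group $M$); it is the pixel of shadow image $(j-1)k+\delta$. A valid partition is $\vec\lambda=(\lambda_1,\ldots,\lambda_M)$ of non-negative integers with $\max_j\lambda_j\le k$ and $\lambda_M\le r$. Selecting $\lambda_j$ (fixed) positions of group $j$, $C(\vec\lambda)$ is the multiset of carried indices and $\#C(\vec\lambda)$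 the number of its distinct elements; probabilities are over the random permutations. $\mathcal{E}^{\vec\lambda}_x(B)$ is the set of $M\times x$ matrices $E$ with entries in $\{0,1\}$ whose last row equals $B$, whose $i$-th row sum is $\lambda_i$ for every $i=1,\ldots,M$, and each of whose column sums is at least $1$. *)

From mathcomp Require Import all_boot all_order all_algebra all_fingroup.
Set Implicit Arguments. Unset Strict Implicit. Unset Printing Implicit Defensive.

Definition ngroups (n k : nat) : nat := (n + k.-1) %/ k.
Definition lastsize (n k : nat) : nat := n - (ngroups n k).-1 * k.

(* Groups are numbered 0..M-1 (paper: 1..M); positions and indices are 'I_k
   (paper: 1..k).  A draw is a family of permutations s : 'I_M -> 'S_k, with
   the permutation of group 0 (paper: group 1) forced to be the identity. *)
Definition sample_space (M k : nat) : {set {ffun 'I_M -> {perm 'I_k}}} :=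
  [set s : {ffun 'I_M -> {perm 'I_k}} | [forall j : 'I_M, (val j == 0) ==> (s j == 1%g)]].

(* P j = set of selected positions of group j; carried index of position d
   of group j is s j d.  Distinct carried indices: *)
Definition carried (M k : nat) (P : nat -> {set 'I_k}) (s : {ffun 'I_M -> {perm 'I_k}})
  : {set 'I_k} := \bigcup_(j : 'I_M) ((s j : {perm 'I_k}) @: P j).

Definition prob_numC (M k : nat) (P : nat -> {set 'I_k}) (x : nat) : rat :=
  (#|[set s in sample_space M k | #|carried P s| == x]|)%:R
  / (#|sample_space M k|)%:R.

Definition Eset (M x : nat) (lam : nat -> nat) (B : 'rV[bool]_x) : {set 'M[bool]_(M, x)} :=
  [set E : 'M[bool]_(M, x) |
     [forall i : 'I_M, (val i == M.-1) ==> (row i E == B)]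
  && [forall i : 'I_M, \sum_(c < x) (E i c : nat) == lam i]
  && [forall c : 'I_x, 1 <= \sum_(i < M) (E i c : nat)]].

From mathcomp Require Import all_boot all_order all_algebra all_fingroup.
From mathcomp Require Import ring.
Set Implicit Arguments. Unset Strict Implicit. Unset Printing Implicit Defensive.

Import GRing.Theory Num.Theory.

(** Composing all the permutations with a common permutation changes neither
    #C nor the uniform law, so the first group may be drawn at random as well;
    then the carried sets [s_j @: P_j] are independent uniform [lam_j]-subsets
    of the [k] indices.  Every further step uses the same symmetry: a
    statistic on a set of configurations that commutes with relabelling the
    indices has fibres of equal size over equinumerous sets.  Choosing the
    union ([C(k, x)] ways) and identifying it with the first [x] indices, then
    fixing the last carried set to the support of [B] ([C(x, lam_M)] ways),
    leaves exactly the incidence matrices of [Eset]; finally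
    [C(k, x) C(x, lam_M) = C(k, lam_M) C(k - lam_M, x - lam_M)] and the factor
    [C(k, lam_M)] cancels against the last group. *)

Lemma card_in_bij (T1 T2 : finType) (A : {set T1}) (B : {set T2})
    (f : T1 -> T2) (g : T2 -> T1) :
  {in A, forall a, f a \in B} -> {in B, forall b, g b \in A} ->
  {in A, cancel f g} -> {in B, cancel g f} -> #|A| = #|B|.
Proof.
move=> fAB gBA fK gK; rewrite -(card_in_imset (can_in_inj fK)).
congr #|pred_of_set _|; apply/setP => b.
apply/imsetP/idP => [[a aA ->]|bB]; first exact: fAB.
by exists (g b); rewrite ?gBA ?gK.
Qed.

Lemma sum_nat_mem_card (T : finType) (A : {pred T}) : \sum_x (x \in A : nat) = #|A|.
Proof. by rewrite -sum1_card [RHS]big_mkcond; apply: eq_bigr => x _; case: (x \in A). Qed.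

Lemma mul_bin_sub k x w : w <= x -> x <= k ->
  'C(k, x) * 'C(x, w) = 'C(k, w) * 'C(k - w, x - w).
Proof.
move=> le_wx le_xk; have le_wk := leq_trans le_wx le_xk.
have fact_pos : 0 < w`! * (x - w)`! * (k - x)`! by rewrite !muln_gt0 !fact_gt0.
apply/eqP; rewrite -(eqn_pmul2r fact_pos); apply/eqP.
have sub_xw : (k - w) - (x - w) = k - x by rewrite subnBA // subnK.
have lhs : 'C(k, x) * 'C(x, w) * (w`! * (x - w)`! * (k - x)`!) = k`!.
  by rewrite -(bin_fact le_xk) -(bin_fact le_wx); ring.
have rhs : 'C(k, w) * 'C(k - w, x - w) * (w`! * (x - w)`! * (k - x)`!) = k`!.
  by rewrite -(bin_fact le_wk) -(bin_fact (leq_sub2r w le_xk)) sub_xw; ring.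
by rewrite lhs rhs.
Qed.

Lemma imset_permM (T : finType) (s t : {perm T}) (A : {set T}) :
  (s * t)%g @: A = t @: (s @: A).
Proof. by rewrite -imset_comp; apply: eq_imset => y; rewrite permM. Qed.

Lemma exists_perm_imset (T : finType) (A B : {set T}) :
  #|A| = #|B| -> exists t : {perm T}, t @: A = B.
Proof.
(* Send the enumeration of A followed by that of its complement, position by
   position, onto the same listing for B. *)
move=> eq_AB.
pose eA := enum A ++ enum (~: A); pose eB := enum B ++ enum (~: B).
have uniq_enum (C : {set T}) : uniq (enum C ++ enum (~: C)).
  by rewrite cat_uniq !enum_uniq andbT /=; apply/hasPn => y; rewrite !mem_enum inE.
have eA_full y : y \in eA by rewrite mem_cat !mem_enum in_setC orbN.
have size_eAB : size eA = size eB by rewrite !size_cat -!cardE !cardsC.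
pose f y := nth y eB (index y eA).
have f_inj : injective f.
  move=> y z; rewrite /f (set_nth_default z y) -?size_eAB ?index_mem //.
  move/eqP; rewrite nth_uniq ?uniq_enum -?size_eAB ?index_mem // => /eqP eq_idx.
  by rewrite -(nth_index y (eA_full y)) eq_idx nth_index.
exists (perm f_inj); apply/eqP; rewrite eqEcard (card_imset _ perm_inj) eq_AB leqnn andbT.
apply/subsetP => _ /imsetP[y yA ->]; rewrite permE /f.
have idx_y : index y eA < #|A|.
  by rewrite /eA index_cat mem_enum yA cardE index_mem mem_enum.
by rewrite nth_cat -cardE -eq_AB idx_y -mem_enum mem_nth // -cardE -eq_AB.
Qed.

Section EquivariantCount.

Variables (T D : finType) (act : D -> {perm T} -> D) (f : D -> {set T}).
Variable S : {set D}.
Hypothesis act1 : forall d, act d 1%g = d.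
Hypothesis actM : forall d s t, act d (s * t)%g = act (act d s) t.
Hypothesis act_stable : forall d t, d \in S -> act d t \in S.
Hypothesis f_act : forall d t, f (act d t) = t @: f d.

Lemma card_fiber_eq (Q Q' : {set T}) : #|Q| = #|Q'| ->
  #|[set d in S | f d == Q]| = #|[set d in S | f d == Q']|.
Proof.
move=> /exists_perm_imset[t tQ].
have actK u : cancel (act^~ u) (act^~ u^-1%g) by move=> d; rewrite -actM mulgV act1.
apply: (card_in_bij (f := act^~ t) (g := act^~ t^-1%g)) => d.
- by rewrite !inE => /andP[dS /eqP fd]; rewrite act_stable //= f_act fd tQ.
- rewrite !inE => /andP[dS /eqP fd]; rewrite act_stable //= f_act fd -tQ.
  by rewrite -imset_permM mulgV imset_perm1.
- by move=> _; rewrite actK.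
- by move=> _; rewrite -{2}(invgK t) actK.
Qed.

Lemma card_equivariant_fibers (q : nat) (Q : {set T}) :
  {in S, forall d, #|f d| = q} -> #|Q| = q ->
  #|S| = 'C(#|T|, q) * #|[set d in S | f d == Q]|.
Proof.
move=> fS Qq; rewrite -sum1_card (partition_big f (fun Q' => #|Q'| == q)) => [|d /fS ->//].
rewrite -card_draws -sum_nat_const /=; apply: eq_big => [Q'|Q' /eqP Q'q]; first by rewrite inE.
by rewrite sum1dep_card (card_fiber_eq (Q' := Q)) // Q'q.
Qed.

End EquivariantCount.

Lemma card_perms (T : finType) : #|{perm T}| = #|T|`!.
Proof. by rewrite -cardsT -card_perm; apply: eq_card => s; rewrite inE; apply/esym/subsetP. Qed.

Section PermsOnto.

Variable T : finType.
Implicit Types A B : {set T}.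

Definition perms_onto A B : {set {perm T}} := [set s : {perm T} | s @: A == B].

Let perms_ontoE A B : perms_onto A B = [set s in [set: {perm T}] | s @: A == B].
Proof. by apply/setP => s; rewrite !inE. Qed.

Lemma card_perms_onto A B :
  #|perms_onto A B| = if #|B| == #|A| then #|perms_onto A A| else 0.
Proof.
case: eqP => [eq_BA|ne_BA].
  rewrite !perms_ontoE.
  apply: (card_fiber_eq (act := fun s t => (s * t)%g) (f := fun s => s @: A)) eq_BA => //.
  - exact: mulg1.
  - exact: mulgA.
  - by move=> s t; rewrite imset_permM.
apply/eqP; rewrite cards_eq0; apply/eqP/setP => s; rewrite !inE.
apply/negbTE/eqP => sAB; apply: ne_BA.
by rewrite -sAB card_imset //; apply: perm_inj.
Qed.

Lemma card_perms_onto_self A : 'C(#|T|, #|A|) * #|perms_onto A A| = #|T|`!.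
Proof.
rewrite perms_ontoE -card_perms -[#|{perm T}|]cardsT; symmetry.
apply: (card_equivariant_fibers (act := fun s t => (s * t)%g) (f := fun s => s @: A)) => //.
- exact: mulg1.
- exact: mulgA.
- by move=> s t; rewrite imset_permM.
- by move=> s _; rewrite card_imset //; apply: perm_inj.
Qed.

End PermsOnto.

Definition sized_families (T : finType) {I : finType} (lam : I -> nat)
  : {set {ffun I -> {set T}}} := [set R : {ffun I -> {set T}} | [forall i, #|R i| == lam i]].

Definition covers (T : finType) {I : finType} (lam : I -> nat)
  : {set {ffun I -> {set T}}} := [set R in sized_families T lam | \bigcup_i R i == setT].

Definition relabel (I T : finType) (R : {ffun I -> {set T}}) (t : {perm T})
  : {ffun I -> {set T}} := [ffun i => t @: R i].

Section Relabel.

Variables (I T : finType) (lam : I -> nat).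
Implicit Types (R : {ffun I -> {set T}}) (s t : {perm T}).

Lemma relabel1 R : relabel R 1%g = R.
Proof. by apply/ffunP => i; rewrite ffunE imset_perm1. Qed.

Lemma relabelM R s t : relabel R (s * t)%g = relabel (relabel R s) t.
Proof. by apply/ffunP => i; rewrite !ffunE imset_permM. Qed.

Lemma relabel_sized R t :
  R \in sized_families T lam -> relabel R t \in sized_families T lam.
Proof.
rewrite !inE => /forallP sizedR; apply/forallP => i.
by rewrite ffunE card_imset //; apply: perm_inj.
Qed.

Lemma bigcup_relabel R t : \bigcup_i relabel R t i = t @: \bigcup_i R i.
Proof.
rewrite (big_morph _ (imsetU _) (imset0 _)).
by apply: eq_bigr => i _; rewrite ffunE.
Qed.

Lemma card_sized_families_union (x : nat) (U : {set T}) : #|U| = x ->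
  #|[set R in sized_families T lam | #|\bigcup_i R i| == x]|
  = 'C(#|T|, x) * #|[set R in sized_families T lam | \bigcup_i R i == U]|.
Proof.
move=> Ux; rewrite [LHS](card_equivariant_fibers (act := @relabel I T)
                           (f := fun R => \bigcup_i R i) _ _ _ _ _ Ux).
- congr (_ * _); apply: eq_card => R; rewrite !inE.
  by case: (eqVneq (\bigcup_i R i) U) => [->|]; rewrite ?Ux ?eqxx ?andbF ?andbT.
- exact: relabel1.
- exact: relabelM.
- move=> R t /setIdP[sizedR /eqP cupR]; apply/setIdP; split; first exact: relabel_sized.
  by rewrite bigcup_relabel (card_imset _ perm_inj) cupR.
- exact: bigcup_relabel.
- by move=> R; rewrite inE => /andP[_ /eqP].
Qed.

Lemma card_covers_by_component (j : I) (Q : {set T}) : #|Q| = lam j ->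
  #|covers T lam| = 'C(#|T|, lam j) * #|[set R in covers T lam | R j == Q]|.
Proof.
move=> Qj; apply: (card_equivariant_fibers (act := @relabel I T) (f := fun R => R j)) => //.
- exact: relabel1.
- exact: relabelM.
- move=> R t /setIdP[sizedR /eqP cupR]; apply/setIdP; split; first exact: relabel_sized.
  rewrite bigcup_relabel cupR eqEcard subsetT.
  by rewrite (card_imset _ perm_inj) leqnn.
- by move=> R t; rewrite ffunE.
- by move=> R; rewrite !inE => /andP[/forallP/(_ j)/eqP].
Qed.

End Relabel.

Lemma card_sized_families_onto_image (I T T' : finType) (lam : I -> nat) (h : T' -> T) :
  injective h ->
  #|[set R in sized_families T lam | \bigcup_i R i == h @: setT]| = #|covers T' lam|.
Proof.
move=> h_inj.
have preimK (A : {set T}) : A \subset h @: setT -> h @: (h @^-1: A) = A.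
  move=> /subsetP sA; apply/setP => y; apply/imsetP/idP => [[c]|yA].
    by rewrite inE => cA ->.
  by have /imsetP[c _ yE] := sA y yA; exists c; rewrite // inE -yE.
have imK (A : {set T'}) : h @^-1: (h @: A) = A.
  by apply/setP => c; rewrite inE mem_imset.
have cup_sub R : \bigcup_i R i = h @: setT -> forall i, R i \subset h @: setT.
  by move=> <- i; apply: (bigcup_sup i).
apply: (card_in_bij (f := fun R : {ffun I -> {set T}} => [ffun i => h @^-1: R i])
                    (g := fun R : {ffun I -> {set T'}} => [ffun i => h @: R i])) => R.
- rewrite !inE => /andP[/forallP sizedR /eqP cupR]; apply/andP; split.
    apply/forallP => i; rewrite ffunE -(card_imset _ h_inj) preimK ?sizedR //.
    exact: cup_sub.
  rewrite eqEsubset subsetT; apply/subsetP => c _.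
  have /bigcupP[i _ Ri_hc] : h c \in \bigcup_i R i by rewrite cupR imset_f.
  by apply/bigcupP; exists i; rewrite // ffunE inE.
- rewrite !inE => /andP[/forallP sizedR /eqP cupR]; apply/andP; split.
    by apply/forallP => i; rewrite ffunE card_imset.
  rewrite -cupR (big_morph _ (imsetU _) (imset0 _)).
  by apply/eqP/eq_bigr => i _; rewrite ffunE.
- move=> /setIdP[_ /eqP /cup_sub sub_R]; apply/ffunP => i.
  by rewrite !ffunE preimK.
- by move=> _; apply/ffunP => i; rewrite !ffunE imK.
Qed.

Section PermFamilies.

Variables (I T : finType) (A : I -> {set T}) (lam : I -> nat).
Hypothesis card_A : forall i, #|A i| = lam i.

Lemma card_perm_family (R : {ffun I -> {set T}}) :
  #|[set s : {ffun I -> {perm T}} | [ffun i => s i @: A i] == R]|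
  = (R \in sized_families T lam) * \prod_i #|perms_onto (A i) (A i)|.
Proof.
have -> : #|[set s : {ffun I -> {perm T}} | [ffun i => s i @: A i] == R]|
          = \prod_i #|perms_onto (A i) (R i)|.
  rewrite -cardsXn; apply: eq_card => s; rewrite in_setXn inE.
  apply/eqP/forallP => [<- i|sAR]; first by rewrite inE ffunE.
  by apply/ffunP => i; rewrite ffunE; apply/eqP; have := sAR i; rewrite inE.
under eq_bigr do rewrite card_perms_onto.
rewrite inE; case: (boolP [forall i, #|R i| == lam i]) => [/forallP sizedR|].
  by rewrite mul1n; apply: eq_bigr => i _; rewrite card_A sizedR.
by case/forallPn => i /negbTE unsized_i; rewrite mul0n (bigD1 i) //= card_A unsized_i mul0n.
Qed.

Lemma card_perm_family_pred (g : pred {ffun I -> {set T}}) :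
  #|[set s : {ffun I -> {perm T}} | g [ffun i => s i @: A i]]|
  = \prod_i #|perms_onto (A i) (A i)|
    * #|[set R in sized_families T lam | g R]|.
Proof.
pose F (s : {ffun I -> {perm T}}) := [ffun i => s i @: A i].
rewrite -!sum1dep_card (partition_big F g) //= big_distrr /=.
rewrite big_mkcond [RHS]big_mkcond /=; apply: eq_bigr => R _.
have [gR|_] := boolP (g R); last by rewrite andbF.
rewrite andbT (eq_bigl (fun s => F s == R)) => [|s]; last first.
  by rewrite andb_idl // => /eqP FR; rewrite -FR in gR.
by rewrite sum1dep_card card_perm_family muln1; case: (_ \in _); rewrite ?mul1n.
Qed.

Lemma prod_card_perms_onto_bin :
  \prod_i (#|perms_onto (A i) (A i)| * 'C(#|T|, lam i)) = #|T|`! ^ #|I|.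
Proof.
rewrite -prod_nat_const; apply: eq_bigr => i _.
by rewrite mulnC -card_A card_perms_onto_self.
Qed.

End PermFamilies.

Section SampleSpace.

Variables (M k : nat).
Implicit Types (s : {ffun 'I_M -> {perm 'I_k}}) (t : {perm 'I_k}).

Lemma in_sample_space (j0 : 'I_M) s : val j0 = 0 ->
  (s \in sample_space M k) = (s j0 == 1%g).
Proof.
move=> j0_0; rewrite inE; apply/forallP/eqP => [/(_ j0)|s_j0 j].
  by rewrite j0_0 => /eqP.
apply/implyP => /eqP j_0; suff -> : j = j0 by rewrite s_j0.
by apply: val_inj; rewrite j_0.
Qed.

Lemma card_sample_space_shift (p : pred {ffun 'I_M -> {perm 'I_k}}) : 0 < M ->
  (forall s t, p [ffun j => (s j * t)%g] = p s) ->
  #|[set s | p s]| = k`! * #|[set s in sample_space M k | p s]|.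
Proof.
move=> M_gt0 p_shift; pose j0 := Ordinal M_gt0.
rewrite -card_Sn -cardsT -cardsX; symmetry.
apply: (card_in_bij (f := fun ts : {perm 'I_k} * {ffun 'I_M -> {perm 'I_k}} =>
                            [ffun j => (ts.2 j * ts.1)%g])
                    (g := fun s => (s j0, [ffun j => (s j * (s j0)^-1)%g]))).
- by move=> [t s] /setXP[_ /setIdP[_ p_s]]; rewrite inE p_shift.
- move=> s; rewrite inE => p_s; apply/setXP; split; first by rewrite inE.
  apply/setIdP; rewrite p_shift (in_sample_space _ (j0 := j0)) //.
  by rewrite ffunE mulgV.
- move=> [t s] /setXP[_ /setIdP[s_SS _]].
  have /eqP s_j0 : s j0 == 1%g by rewrite -(in_sample_space _ (j0 := j0)).
  congr pair; first by rewrite ffunE s_j0 mul1g.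
  by apply/ffunP => j; rewrite !ffunE s_j0 mul1g mulgK.
- by move=> s _; apply/ffunP => j; rewrite !ffunE mulgKV.
Qed.

Lemma card_sample_space : 0 < M -> #|sample_space M k| = k`! ^ M.-1.
Proof.
move=> M_gt0; apply/eqP; rewrite -(eqn_pmul2l (fact_gt0 k)) -expnS prednK //.
have := card_sample_space_shift (p := predT) M_gt0 (fun _ _ => erefl).
rewrite cardsT card_ffun card_Sn !card_ord => ->.
by apply/eqP; congr (_ * _); apply: eq_card => s; rewrite !inE andbT.
Qed.

Variable P : nat -> {set 'I_k}.

Lemma carried_shift s t : carried P [ffun j => (s j * t)%g] = t @: carried P s.
Proof.
rewrite /carried (big_morph _ (imsetU _) (imset0 _)).
by apply: eq_bigr => j _; rewrite ffunE imset_permM.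
Qed.

Lemma card_carried (lam : 'I_M -> nat) (x : nat) : (forall j : 'I_M, #|P j| = lam j) ->
  #|[set s : {ffun 'I_M -> {perm 'I_k}} | #|carried P s| == x]|
  = \prod_(j : 'I_M) #|perms_onto (P j) (P j)|
    * #|[set R in sized_families 'I_k lam | #|\bigcup_j R j| == x]|.
Proof.
move=> card_P; rewrite -(card_perm_family_pred card_P); apply: eq_card => s.
by rewrite !inE /carried; under [in RHS]eq_bigr do rewrite ffunE.
Qed.

End SampleSpace.

Lemma card_covers_last_Eset (L x : nat) (lam : nat -> nat) (B : 'rV[bool]_x) :
  #|[set R in covers 'I_x (fun i : 'I_L.+1 => lam i) | R ord_max == [set c | B ord0 c]]|
  = #|Eset L.+1 lam B|.
Proof.
apply: (card_in_bij (f := fun R : {ffun 'I_L.+1 -> {set 'I_x}} => (\matrix_(i, c) (c \in R i))%R)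
                    (g := fun E : 'M[bool]_(L.+1, x) => [ffun i => [set c | E i c]])).
- move=> R; rewrite !inE => /andP[/andP[/forallP sizedR /eqP cupR] /eqP R_last].
  apply/andP; split; first (apply/andP; split); apply/forallP.
  + move=> i; apply/implyP => /eqP i_last; rewrite (_ : i = ord_max); last exact: val_inj.
    by apply/eqP/rowP => c; rewrite !mxE R_last inE.
  + move=> i; rewrite -(eqP (sizedR i)) -sum_nat_mem_card.
    by apply/eqP/eq_bigr => c _; rewrite mxE.
  + move=> c; rewrite lt0n sum_nat_eq0 negb_forall.
    have /bigcupP[i _ Ri_c] : c \in \bigcup_i R i by rewrite cupR inE.
    by apply/existsP; exists i; rewrite mxE Ri_c.
- move=> E; rewrite !inE => /andP[/andP[/forallP E_last /forallP E_sum] /forallP E_cov].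
  apply/andP; split; first (apply/andP; split).
  + apply/forallP => i; rewrite ffunE -sum_nat_mem_card.
    by under eq_bigr do rewrite inE; exact: E_sum.
  + rewrite eqEsubset subsetT; apply/subsetP => c _.
    have := E_cov c; rewrite lt0n sum_nat_eq0 negb_forall => /existsP[i E_ic].
    by apply/bigcupP; exists i; rewrite // ffunE inE; case: (E i c) E_ic.
  + have /implyP/(_ (eqxx _))/eqP E_B := E_last ord_max.
    by apply/eqP/setP => c; rewrite ffunE !inE -E_B mxE.
- by move=> R _; apply/ffunP => i; apply/setP => c; rewrite ffunE inE mxE.
- by move=> E _; apply/matrixP => i c; rewrite mxE ffunE inE.
Qed.

Lemma card_carried_eq_Eset (L k x : nat) (lam : nat -> nat) (P : nat -> {set 'I_k})
    (B : 'rV[bool]_x) :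
  x <= k -> (forall j : 'I_L.+1, #|P j| = lam j) ->
  \sum_(c < x) (B ord0 c : nat) = lam L ->
  k`! * #|[set s in sample_space L.+1 k | #|carried P s| == x]|
  = \prod_(j < L.+1) #|perms_onto (P j) (P j)| * ('C(k, x) * 'C(x, lam L))
    * #|Eset L.+1 lam B|.
Proof.
move=> x_le_k card_P sum_B.
pose h := widen_ord x_le_k.
have h_inj : injective h by move=> a b [eq_ab]; apply: val_inj.
have card_h : #|h @: setT| = x by rewrite (card_imset _ h_inj) cardsT card_ord.
have card_B : #|[set c | B ord0 c]| = lam (@ord_max L).
  by rewrite -sum_B -sum_nat_mem_card; apply: eq_bigr => c _; rewrite inE.
rewrite -(card_sample_space_shift (p := fun s => #|carried P s| == x)) //; last first.
  by move=> s t; rewrite carried_shift (card_imset _ perm_inj).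
rewrite (card_carried _ card_P) (card_sized_families_union _ card_h).
rewrite (card_sized_families_onto_image _ h_inj) (card_covers_by_component card_B).
by rewrite card_covers_last_Eset !card_ord !mulnA.
Qed.

Theorem lemma4 (n k : nat) (lam : nat -> nat) (P : nat -> {set 'I_k})
    (x : nat) (B : 'rV[bool]_x) :
  2 <= k -> k <= n ->
  (* valid partition *)
  (forall j, j < ngroups n k -> lam j <= k) ->
  lam (ngroups n k).-1 <= lastsize n k ->
  (* lam j positions selected in group j; those of the last group are < r *)
  (forall j, j < ngroups n k -> #|P j| = lam j) ->
  P (ngroups n k).-1 \subset [set d : 'I_k | d < lastsize n k] ->
  lam (ngroups n k).-1 <= x -> x <= k ->
  \sum_(c < x) (B ord0 c : nat) = lam (ngroups n k).-1 ->
  prob_numC (ngroups n k) P x =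
    ((('C(k - lam (ngroups n k).-1, x - lam (ngroups n k).-1)
       * #|Eset (ngroups n k) lam B|)%:R : rat)
    / (\prod_(0 <= j < (ngroups n k).-1) 'C(k, lam j))%:R)%R.
Proof.
move=> k_ge2 k_le_n lam_le_k _ card_P _ w_le_x x_le_k sum_B.
have M_gt0 : 0 < ngroups n k.
  by rewrite divn_gt0 ?(leq_trans _ k_ge2) // (leq_trans k_le_n) ?leq_addr.
move: (ngroups n k) M_gt0 lam_le_k card_P w_le_x sum_B => [//|L] _ /=.
move=> lam_le_k card_P w_le_x sum_B.
have card_Pj (j : 'I_L.+1) : #|P j| = lam j by apply: card_P.
have prod_gt0 : 0 < \prod_(0 <= j < L) 'C(k, lam j).
  by rewrite big_mkord prodn_gt0 // => j; rewrite bin_gt0 lam_le_k // leqW.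
rewrite /prob_numC card_sample_space //=; apply/eqP.
rewrite eqr_div ?pnatr_eq0 -?lt0n ?expn_gt0 ?fact_gt0 // -!natrM eqr_nat.
rewrite -(eqn_pmul2l (fact_gt0 k)) mulnA (card_carried_eq_Eset x_le_k card_Pj sum_B).
have := prod_card_perms_onto_bin card_Pj; rewrite !card_ord => prod_perms.
apply/eqP; rewrite (mul_bin_sub w_le_x x_le_k) [RHS]mulnCA -expnS -prod_perms.
by rewrite big_split !big_ord_recr big_mkord /=; ring.
Qed.
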